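(* Let $m\neq\pm1$ be a square-free integer, $p$ a prime, $k$ a positive integer, $\alpha$ a root of $X^{p^k}-m$, $M=\mathbb{Q}(\alpha)$, $r$ the remainder of $m$ modulo $p^{k+1}$, $s:=v_p(m^p-m)-1$, and for $t\in\mathbb{N}$ let $h^{(r)}_t(X)=\frac{X^{p^k}-r^{p^t}}{X^{p^{k-t}}-r}=\sum_{i=0}^{p^t-1} r^{i}X^{p^k-(i+1)p^{k-t}}\in\mathbb{Z}[X]$. Suppose $s<k$. Then the following $p^k$ elements of $M$ are algebraic integers and are linearly independent over $\mathbb{Q}$: $$\alpha^j\cdot\frac{h^{(r)}_t(\alpha)}{p^t}\quad\text{for } 0\leq t\leq s-1,\ 0\leq j\leq p^{k-t}-p^{k-t-1}-1,$$ together with $$\alpha^j\cdot\frac{h^{(r)}_s(\alpha)}{p^s}\quad\text{for } 0\leq j\leq p^{k-s}-1.$$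
   Context: $v_p$ denotes the $p$-adic valuation on $\mathbb{Q}$. *)

From mathcomp Require Import all_boot all_order all_algebra all_field.
Set Implicit Arguments. Unset Strict Implicit. Unset Printing Implicit Defensive.
Import Order.TTheory GRing.Theory Num.Theory.
Local Open Scope ring_scope.

Definition squarefree_int (m : int) : Prop :=
  m != 0 /\ forall d : nat, (d * d %| `|m|)%N -> d = 1%N.

Definition vp (p : nat) (z : int) : nat := logn p `|z|%N.

Definition hpoly (p k t : nat) (r : int) : {poly int} :=
  \sum_(i < p ^ t) r ^+ i *: 'X^(p ^ k - i.+1 * p ^ (k - t)).

Definition basis_index (p k s : nat) : seq (nat * nat) :=
  [seq (t, j) | t <- iota 0 s, j <- iota 0 (p ^ (k - t) - p ^ (k - t - 1))]
  ++ [seq (s, j) | j <- iota 0 (p ^ (k - s))].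

Definition basis_elt (p k : nat) (r : int) (alpha : algC) (tj : nat * nat) : algC :=
  alpha ^+ tj.2 * (map_poly intr (hpoly p k tj.1 r)).[alpha] / (p ^ tj.1)%:R.

Definition Q_lin_indep (I : eqType) (idx : seq I) (f : I -> algC) : Prop :=
  uniq idx /\
  forall c : I -> rat, \sum_(i <- idx) ratr (c i) * f i = 0 ->
    forall i, i \in idx -> c i = 0.

From mathcomp Require Import all_boot all_order all_algebra all_field.
From mathcomp Require Import zify ring.
Import Order.TTheory GRing.Theory Num.Theory.
Set Implicit Arguments. Unset Strict Implicit. Unset Printing Implicit Defensive.
Local Open Scope ring_scope.

(* Integrality: put [beta = alpha^(p^(k-t))], so that [h_t(alpha)] is the
   geometric sum [(beta^(p^t) - r^(p^t)) / (beta - r)] and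
   [beta^(p^t) = m = r^(p^t) + c] with [p^(t+1) | c] (because [t <= s]).
   Expanding [c] binomially in [beta - r] gives a monic integral equation for
   [h_t(alpha) / p^t], whose coefficients are integers because
   [v_p(binom(p^t, i+1)) >= t - i].
   Independence: [X^(p^k) - m] is Eisenstein at any prime dividing the
   square-free [m], so no nonzero rational polynomial of degree [< p^k]
   vanishes at [alpha]. Each member of the family is such a polynomial in
   [alpha], of degree [j + p^k - p^(k-t)], and these degrees are pairwise
   distinct. *)

Lemma squarefree_prime_factor (m : int) :
  squarefree_int m -> m != 1 -> m != -1 ->
  exists q, [/\ prime q, (q %| `|m|)%N & ~~ (q * q %| `|m|)%N].
Proof.
move=> [m0 sqm] m1 mN1.
have m_gt1 : (1 < `|m|)%N by clear sqm; move: m0 m1 mN1; case: m => [[|[|n]]|[|n]].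
exists (pdiv `|m|); split; [exact: pdiv_prime | exact: pdiv_dvd |].
by apply/negP => /sqm pdiv1; have := pdiv_prime m_gt1; rewrite pdiv1.
Qed.

Lemma irreducible_XnsubC (m : int) (n : nat) :
  squarefree_int m -> m != 1 -> m != -1 -> (0 < n)%N ->
  irreducible_poly (map_poly intr ('X^n - m%:P) : {poly rat}).
Proof.
move=> sqm m1 mN1 n_gt0; apply/irreducible_rat_int.
have [q [q_pr q_m q2_m]] := squarefree_prime_factor sqm m1 mN1.
apply: (eisenstein_crit q_pr); rewrite ?size_XnsubC ?lead_coefXnsubC //.
- by rewrite eqSS -lt0n.
- by rewrite dvdz1 absz_nat; case: eqP q_pr => // ->.
- rewrite coefB coefXn coefC ltn_eqF // sub0r unfold_in /= abszN expr2.
  exact: q2_m.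
- move=> i i_lt_n; rewrite coefB coefXn coefC (ltn_eqF i_lt_n) sub0r.
  by case: eqP => _; rewrite ?rpredN ?dvdz0 // unfold_in /= absz_nat.
Qed.

(* The minimal polynomial of [x] divides [q] and, by irreducibility, is associate to [p]. *)
Lemma irredp_root_leq_size (p q : {poly rat}) (x : algC) :
  irreducible_poly p -> root (map_poly ratr p) x ->
  q != 0 -> root (map_poly ratr q) x -> (size p <= size q)%N.
Proof.
move=> p_irr px q0 qx; have [mx [_ mx_monic] mx_dvd] := minCpolyP x.
have mx_size : size mx != 1%N.
  have mxx : root (map_poly ratr mx) x by rewrite mx_dvd dvdpp.
  rewrite -(size_map_poly (ratr : {rmorphism rat -> algC})) neq_ltn.
  by rewrite (root_size_gt1 _ mxx) ?orbT ?map_poly_eq0 ?monic_neq0.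
have [mx_p mx_q] : mx %| p /\ mx %| q by rewrite -!mx_dvd.
by rewrite -(eqp_size (p_irr _ mx_size mx_p)); apply: dvdp_leq.
Qed.

Lemma radical_root_poly_eq0 (m : int) (n : nat) (alpha : algC) (q : {poly rat}) :
  squarefree_int m -> m != 1 -> m != -1 -> (0 < n)%N -> alpha ^+ n = m%:~R ->
  (size q <= n)%N -> root (map_poly ratr q) alpha -> q = 0.
Proof.
move=> sqm m1 mN1 n_gt0 alpha_n q_small q_root; apply/eqP/negPn/negP => q_neq0.
have Xn_m_root : root (map_poly ratr (map_poly intr ('X^n - m%:P))) alpha.
  rewrite -map_poly_comp (eq_map_poly (ratr_int _)) rmorphB /= map_polyXn map_polyC.
  by rewrite /root !hornerE alpha_n subrr.
have := irredp_root_leq_size (irreducible_XnsubC sqm m1 mN1 n_gt0) Xn_m_root q_neq0 q_root.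
by rewrite size_rat_int_poly size_XnsubC // ltnNge q_small.
Qed.

Lemma distinct_size_polys_free (R : idomainType) (I : eqType) (idx : seq I)
    (f : I -> {poly R}) (c : I -> R) :
  uniq idx -> {in idx &, injective (fun i => size (f i))} ->
  {in idx, forall i, f i != 0} ->
  \sum_(i <- idx) c i *: f i = 0 -> {in idx, forall i, c i = 0}.
Proof.
move=> idx_uniq size_inj f_neq0 sum0 i0 i0_idx; apply/eqP/negPn/negP => ci0.
pose P n := has (fun i => (c i != 0) && (size (f i) == n)) idx.
have exP : exists n, P n.
  by exists (size (f i0)); apply/hasP; exists i0; rewrite ?ci0 ?eqxx.
have ubP n : P n -> (n <= \max_(i <- idx) size (f i))%N.
  by case/hasP => i i_idx /andP[_ /eqP <-]; apply: leq_bigmax_seq.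
have [n /hasP[j j_idx /andP[cj /eqP size_j]] n_max] := ex_maxnP exP ubP.
have top_coef : (\sum_(i <- idx) c i *: f i)`_n.-1 = c j * lead_coef (f j).
  rewrite coef_sum (bigD1_seq j) //= coefZ lead_coefE size_j big1_seq ?addr0 //.
  move=> i /andP[i_j i_idx]; have [-> | ci] := eqVneq (c i) 0.
    by rewrite scale0r coef0.
  have size_i : (size (f i) < n)%N.
    rewrite ltn_neqAle n_max ?andbT; last by apply/hasP; exists i; rewrite ?ci ?eqxx.
    by apply: contra i_j => /eqP size_ij; apply/eqP; apply: size_inj; rewrite ?size_j.
  by rewrite coefZ nth_default ?mulr0 // -ltnS (ltn_predK size_i).
move: top_coef; rewrite sum0 coef0 => /esym/eqP.
by rewrite mulf_eq0 lead_coef_eq0 (negbTE cj) (negbTE (f_neq0 _ j_idx)).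
Qed.

Lemma Aint_of_exprn_int (x : algC) (n : nat) (m : int) :
  (0 < n)%N -> x ^+ n = m%:~R -> x \in Aint.
Proof.
move=> n_gt0 xn; apply: (@root_monic_Aint ('X^n - (m%:~R)%:P)).
- by rewrite /root !hornerE xn subrr.
- exact: monicXnsubC.
- by rewrite polyOverXnsubC rpred_int.
Qed.

Lemma Aint_of_int_recurrence (x : algC) (n : nat) (b : nat -> int) :
  x ^+ n = \sum_(i < n) (b i)%:~R * x ^+ (n.-1 - i) -> x \in Aint.
Proof.
move=> xn; pose g := \poly_(i < n) ((b (n.-1 - i)%N)%:~R : algC).
apply: (@root_monic_Aint ('X^n - g)).
- rewrite /root hornerD hornerN hornerXn horner_poly xn subr_eq0.
  apply/eqP; rewrite (reindex_inj rev_ord_inj) /=; apply: eq_bigr => i _.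
  have i_lt_n := ltn_ord i.
  by rewrite (_ : n - i.+1 = n.-1 - i)%N; [congr (_ * _ ^+ _) | ]; lia.
- by rewrite monicE lead_coefDl ?lead_coefXn // size_polyN size_polyXn ltnS size_poly.
- apply/polyOverP => i; rewrite coefB coefXn coef_poly rpredB ?rpred_nat //.
  by case: ifP; rewrite ?rpred_int ?rpred0.
Qed.

Definition geom_sum (R : pzSemiRingType) (x y : R) (n : nat) : R :=
  \sum_(i < n) x ^+ (n.-1 - i) * y ^+ i.

Lemma geom_sum_exprn (F : idomainType) (x y : F) (n : nat) :
  x ^+ n != y ^+ n ->
  geom_sum x y n ^+ n = \sum_(i < n)
    (y ^+ (n.-1 - i) * (x ^+ n - y ^+ n) ^+ i *+ 'C(n, i.+1)) * geom_sum x y n ^+ (n.-1 - i).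
Proof.
rewrite -subr_eq0; set h := geom_sum x y n; set c := x ^+ n - y ^+ n => c_neq0.
have eps_h : (x - y) * h = c by rewrite /c subrXX.
have c_binom : c = \sum_(i < n) y ^+ (n.-1 - i) * (x - y) ^+ i.+1 *+ 'C(n, i.+1).
  rewrite /c {1}(_ : x = y + (x - y)); last by rewrite addrC subrK.
  rewrite exprDn big_ord_recl subn0 expr0 mulr1 bin0 mulr1n addrAC subrr add0r.
  apply: eq_bigr => i _ /=.
  by rewrite (_ : n - i.+1 = n.-1 - i)%N //; lia.
apply: (mulfI c_neq0); rewrite mulr_sumr {1}c_binom mulr_suml; apply: eq_bigr => i _.
have i_lt_n := ltn_ord i.
rewrite [h ^+ n](_ : _ = h ^+ i.+1 * h ^+ (n.-1 - i)); last by rewrite -exprD; congr (_ ^+ _); lia.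
by rewrite -eps_h !exprS exprMn; ring.
Qed.

Lemma Aint_geom_sum_div (x : algC) (r c : int) (n d : nat) :
  (0 < d)%N -> x ^+ n = r%:~R ^+ n + c%:~R -> c != 0 ->
  (forall i, (i < n)%N -> ((d ^ i.+1)%:Z %| 'C(n, i.+1)%:Z * c ^+ i)%Z) ->
  geom_sum x r%:~R n / d%:R \in Aint.
Proof.
move=> d_gt0 xn c_neq0 dvd_binom.
have xn_r : x ^+ n - r%:~R ^+ n = c%:~R by rewrite xn addrAC subrr add0r.
have d_neq0 : d%:R != 0 :> algC by rewrite pnatr_eq0 -lt0n.
pose b i : int := ('C(n, i.+1)%:Z * c ^+ i %/ (d ^ i.+1)%:Z)%Z * r ^+ (n.-1 - i).
apply: (@Aint_of_int_recurrence _ n b).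
rewrite expr_div_n geom_sum_exprn; last by rewrite -subr_eq0 xn_r intr_eq0.
rewrite mulr_suml; apply: eq_bigr => i _; have i_lt_n := ltn_ord i.
have b_val : (b i)%:~R = 'C(n, i.+1)%:R * c%:~R ^+ i / d%:R ^+ i.+1 * r%:~R ^+ (n.-1 - i) :> algC.
  rewrite rmorphM rmorphXn /=; congr (_ * _); apply: (mulIf (expf_neq0 i.+1 d_neq0)).
  rewrite mulfVK ?expf_neq0 // -natrX -[(d ^ i.+1)%:R]/((d ^ i.+1)%:Z)%:~R -rmorphM.
  by rewrite divzK ?dvd_binom // rmorphM rmorphXn.
have n_split : n = (i.+1 + (n.-1 - i))%N by lia.
rewrite b_val xn_r expr_div_n -mulr_natl [in d%:R ^+ n]n_split exprD.
by field; rewrite !expf_neq0.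
Qed.

Lemma logn_bin_pfactor (p t i : nat) :
  prime p -> (i < p ^ t)%N -> (t <= logn p 'C(p ^ t, i.+1) + i)%N.
Proof.
move=> p_pr i_lt; have pt_gt0 : (0 < p ^ t)%N by rewrite expn_gt0 prime_gt0.
have binom_gt0 : (0 < 'C(p ^ t, i.+1))%N by rewrite bin_gt0.
have binom'_gt0 : (0 < 'C((p ^ t).-1, i))%N by rewrite bin_gt0 -ltnS (ltn_predK pt_gt0).
have := congr1 (logn p) (mul_bin_diag (p ^ t) i).
rewrite !lognM // pfactorK //; have := ltn_logl p (ltn0Sn i); lia.
Qed.

Lemma dvdz_bin_pfactor (p t i : nat) (c : int) :
  prime p -> ((p ^ t.+1)%:Z %| c)%Z -> (i < p ^ t)%N ->
  (((p ^ t) ^ i.+1)%:Z %| 'C(p ^ t, i.+1)%:Z * c ^+ i)%Z.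
Proof.
move=> p_pr; rewrite !unfold_in /= abszM abszX absz_nat => /dvdnP[c' ->] i_lt.
rewrite expnMn mulnCA dvdn_mull // -!expnM.
have binom_gt0 : (0 < 'C(p ^ t, i.+1))%N by rewrite bin_gt0.
rewrite pfactor_dvdn ?muln_gt0 ?binom_gt0 ?expn_gt0 ?prime_gt0 //.
rewrite lognM ?binom_gt0 ?expn_gt0 ?prime_gt0 // pfactorK //.
have := logn_bin_pfactor p_pr i_lt; nia.
Qed.

Lemma dvdz_exprn_iter (d m : int) (p i : nat) :
  (d %| m ^+ p - m)%Z -> (d %| m ^+ (p ^ i) - m)%Z.
Proof.
move=> d_mp; elim: i => [|i IHi]; first by rewrite expn0 expr1 subrr dvdz0.
rewrite expnSr exprM -(subrK (m ^+ p) (_ ^+ p)) -addrA rpredD //.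
by rewrite subrXX dvdz_mulr.
Qed.

(* [m^(p^t) = m] and [r = m] modulo [p^(t+1)], hence [r^(p^t) = m^(p^t) = m]. *)
Lemma dvdz_sub_modz_exprn (m : int) (p k t : nat) :
  prime p -> (t < vp p (m ^+ p - m))%N -> (t <= k)%N ->
  ((p ^ t.+1)%:Z %| m - (m %% (p ^ k.+1)%:Z)%Z ^+ (p ^ t))%Z.
Proof.
move=> p_pr t_lt_v t_le_k; set r := (m %% _)%Z.
have dvd_mp : ((p ^ t.+1)%:Z %| m ^+ p - m)%Z.
  move: t_lt_v; rewrite /vp unfold_in /=.
  have [-> | mp_neq0] := eqVneq `|m ^+ p - m|%N 0%N; first by rewrite logn0.
  by rewrite pfactor_dvdn // lt0n.
have dvd_mr : ((p ^ t.+1)%:Z %| m - r)%Z.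
  rewrite [m in m - r](divz_eq m (p ^ k.+1)%:Z) addrK dvdz_mull //.
  by rewrite unfold_in /= dvdn_exp2l.
rewrite -(subrK (m ^+ (p ^ t)) m) -addrA rpredD //.
  by rewrite -opprB rpredN dvdz_exprn_iter.
by rewrite subrXX dvdz_mulr.
Qed.

Lemma squarefree_neq_exprn (m r : int) (n : nat) :
  squarefree_int m -> m != 1 -> m != -1 -> (1 < n)%N -> m != r ^+ n.
Proof.
move=> [m0 sqm] m1 mN1 n_gt1; apply/eqP => m_rn.
have r1 : `|r|%N = 1%N by apply: sqm; rewrite m_rn abszX mulnn dvdn_exp2l.
have : `|m|%N = 1%N by rewrite m_rn abszX r1 exp1n.
by clear sqm; case: m m1 mN1 {m0 m_rn} => [[|[|n']]|[|n']].
Qed.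

Lemma horner_hpoly (p k t : nat) (r : int) (x : algC) : (t <= k)%N ->
  (map_poly intr (hpoly p k t r)).[x] = geom_sum (x ^+ (p ^ (k - t))) r%:~R (p ^ t).
Proof.
move=> t_le_k; rewrite /hpoly /geom_sum raddf_sum horner_sum; apply: eq_bigr => i _ /=.
rewrite map_polyZ map_polyXn hornerZ hornerXn rmorphXn /= mulrC -exprM.
have pk_split : (p ^ k = p ^ t * p ^ (k - t))%N by rewrite -expnD subnKC.
have i_lt := ltn_ord i; congr (_ ^+ _ * _); move: pk_split i_lt.
move: (p ^ k)%N (p ^ t)%N (p ^ (k - t))%N (nat_of_ord i) => K A B j -> j_lt.
by rewrite -mulnBl mulnC; congr (_ * _); lia.
Qed.

Lemma Aint_hpoly_div (m : int) (p k t : nat) (alpha : algC) :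
  squarefree_int m -> m != 1 -> m != -1 -> prime p ->
  alpha ^+ (p ^ k) = m%:~R -> (t <= k)%N -> (t <= vp p (m ^+ p - m) - 1)%N ->
  (map_poly intr (hpoly p k t (m %% (p ^ k.+1)%:Z)%Z)).[alpha] / (p ^ t)%:R \in Aint.
Proof.
move=> sqm m1 mN1 p_pr alpha_pk t_le_k t_le_s; rewrite horner_hpoly //.
have [-> | t_gt0] := posnP t.
  by rewrite expn0 /geom_sum big_ord1 !expr0 mulr1 divr1 rpred1.
set r := (m %% _)%Z; have pt_gt1 : (1 < p ^ t)%N by rewrite -(expn0 p) ltn_exp2l ?prime_gt1.
apply: (@Aint_geom_sum_div _ r (m - r ^+ (p ^ t))).
- by rewrite expn_gt0 prime_gt0.
- clearbody r; rewrite -exprM -expnD subnK // alpha_pk rmorphB rmorphXn /=.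
  exact/esym/subrKC.
- by rewrite subr_eq0 squarefree_neq_exprn.
- move=> i i_lt; apply: dvdz_bin_pfactor => //.
  by apply: dvdz_sub_modz_exprn => //; lia.
Qed.

Lemma size_hpoly (p k t : nat) (r : int) : (0 < p)%N -> (t <= k)%N ->
  size (hpoly p k t r) = (p ^ k - p ^ (k - t)).+1.
Proof.
move=> p_gt0 t_le_k; have pt_gt0 : (0 < p ^ t)%N by rewrite expn_gt0 p_gt0.
have pkt_gt0 : (0 < p ^ (k - t))%N by rewrite expn_gt0 p_gt0.
have pk_split : (p ^ k = p ^ t * p ^ (k - t))%N by rewrite -expnD subnKC.
rewrite /hpoly (bigD1 (Ordinal pt_gt0)) //= expr0 scale1r mul1n.
rewrite size_addl size_polyXn // ltnS; apply/leq_sizeP => e e_ge.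
rewrite coef_sum big1 // => i i_neq0; rewrite coefZ coefXn.
have i_gt0 : (0 < i)%N by rewrite lt0n; apply: contraNneq i_neq0 => i0; apply/eqP/val_inj.
have i_lt := ltn_ord i; rewrite (_ : (e == _) = false) ?mulr0 //; apply/negbTE.
move: e_ge pk_split i_gt0 i_lt pkt_gt0.
by move: (p ^ k)%N (p ^ t)%N (p ^ (k - t))%N (nat_of_ord i) => K A B j; nia.
Qed.

Definition basis_poly (p k : nat) (r : int) (tj : nat * nat) : {poly rat} :=
  (p ^ tj.1)%:R^-1 *: ('X^(tj.2) * map_poly intr (hpoly p k tj.1 r)).

Definition basis_deg (p k : nat) (tj : nat * nat) : nat :=
  (tj.2 + (p ^ k - p ^ (k - tj.1)))%N.

Lemma horner_basis_poly (p k : nat) (r : int) (x : algC) (tj : nat * nat) :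
  (map_poly ratr (basis_poly p k r tj)).[x] = basis_elt p k r x tj.
Proof.
rewrite /basis_poly /basis_elt map_polyZ rmorphM /= map_polyXn -map_poly_comp.
rewrite (eq_map_poly (ratr_int _)) hornerZ hornerM hornerXn fmorphV rmorph_nat.
by rewrite mulrC.
Qed.

Lemma size_basis_poly (p k : nat) (r : int) (tj : nat * nat) :
  (0 < p)%N -> (tj.1 <= k)%N -> size (basis_poly p k r tj) = (basis_deg p k tj).+1.
Proof.
move=> p_gt0 t_le_k; have h_size := size_hpoly r p_gt0 t_le_k.
rewrite size_scale ?invr_eq0 ?pnatr_eq0 -?lt0n ?expn_gt0 ?p_gt0 //.
by rewrite mulrC size_mulXn -?size_poly_eq0 size_rat_int_poly h_size // addnS.
Qed.

Lemma mem_basis_index (p k s : nat) (tj : nat * nat) : tj \in basis_index p k s ->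
  (tj.1 < s)%N && (tj.2 < p ^ (k - tj.1) - p ^ (k - tj.1 - 1))%N \/
  tj.1 = s /\ (tj.2 < p ^ (k - s))%N.
Proof.
rewrite mem_cat => /orP[/allpairsPdep[t [j [+ + ->]]] | /mapP[j + ->]].
  by rewrite !mem_iota !add0n /= => -> ->; left.
by rewrite mem_iota add0n /= => ->; right.
Qed.

Lemma uniq_basis_index (p k s : nat) : uniq (basis_index p k s).
Proof.
rewrite cat_uniq; apply/and3P; split.
- apply: allpairs_uniq_dep => [|t _|]; rewrite ?iota_uniq //.
  by move=> [t1 j1] [t2 j2] _ _ /= [-> ->].
- apply/hasPn => _ /mapP[j _ ->]; apply/negP => /allpairsPdep[t [j' [t_in _ [ts _]]]].
  by rewrite mem_iota ts in t_in; lia.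
- by rewrite map_inj_uniq ?iota_uniq // => j1 j2 [].
Qed.

Lemma basis_index_fst_le (p k s : nat) (tj : nat * nat) :
  tj \in basis_index p k s -> (tj.1 <= s)%N.
Proof. by case/mem_basis_index => [/andP[/ltnW] | [->]]. Qed.

Section BasisDegree.

Variables (p k s : nat).
Hypothesis p_gt0 : (0 < p)%N.

Lemma leq_pexp_sub (a b : nat) : (a <= b)%N -> (p ^ (k - b) <= p ^ (k - a))%N.
Proof. by move=> le_ab; rewrite leq_pexp2l //; lia. Qed.

(* The degrees for a fixed [t < s] fill [p^k - p^(k-t), p^k - p^(k-t-1)). *)
Lemma basis_deg_lt (tj : nat * nat) : tj \in basis_index p k s ->
  (basis_deg p k tj < p ^ k - (if tj.1 < s then p ^ (k - tj.1 - 1) else 0))%N.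
Proof.
rewrite /basis_deg => tj_in; have := leq_pexp_sub (leq0n tj.1).
have := leq_pexp_sub (leq_addr 1 tj.1); rewrite subn0 subnDA.
by case/mem_basis_index: tj_in => [/andP[-> j_lt] | [-> j_lt]]; rewrite ?ltnn; lia.
Qed.

Lemma basis_deg_ltn_pexp (tj : nat * nat) : tj \in basis_index p k s ->
  (basis_deg p k tj < p ^ k)%N.
Proof. by move/basis_deg_lt; case: ifP; lia. Qed.

Lemma basis_deg_ltn_fst (tj1 tj2 : nat * nat) :
  tj1 \in basis_index p k s -> tj2 \in basis_index p k s ->
  (tj1.1 < tj2.1)%N -> (basis_deg p k tj1 < basis_deg p k tj2)%N.
Proof.
move=> tj1_in tj2_in lt_t; have := basis_deg_lt tj1_in.
have t1_lt_s : (tj1.1 < s)%N by apply: leq_trans lt_t (basis_index_fst_le tj2_in).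
rewrite t1_lt_s -subnDA addn1 /basis_deg; have := leq_pexp_sub lt_t.
by move: (p ^ (k - tj1.1.+1))%N (p ^ (k - tj2.1))%N => X1 X2; lia.
Qed.

Lemma basis_deg_inj : {in basis_index p k s &, injective (basis_deg p k)}.
Proof.
move=> [t1 j1] [t2 j2] tj1_in tj2_in eq_deg.
case: (ltngtP t1 t2) => [lt_t | gt_t | eq_t].
- by have := basis_deg_ltn_fst tj1_in tj2_in lt_t; rewrite eq_deg ltnn.
- by have := basis_deg_ltn_fst tj2_in tj1_in gt_t; rewrite eq_deg ltnn.
- by move: eq_deg; rewrite /basis_deg /= eq_t => /addIn ->.
Qed.

End BasisDegree.

Lemma basis_elt_free (m : int) (p k s : nat) (r : int) (alpha : algC) :
  squarefree_int m -> m != 1 -> m != -1 -> prime p ->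
  alpha ^+ (p ^ k) = m%:~R -> (s <= k)%N ->
  Q_lin_indep (basis_index p k s) (basis_elt p k r alpha).
Proof.
move=> sqm m1 mN1 p_pr alpha_pk s_le_k; have p_gt0 := prime_gt0 p_pr.
have size_basis tj : tj \in basis_index p k s ->
    size (basis_poly p k r tj) = (basis_deg p k tj).+1.
  by move=> /basis_index_fst_le t_le_s; rewrite size_basis_poly ?(leq_trans t_le_s).
split=> [|c sum0]; first exact: uniq_basis_index.
set S := \sum_(tj <- basis_index p k s) c tj *: basis_poly p k r tj.
have S0 : S = 0.
  apply: (radical_root_poly_eq0 sqm m1 mN1 _ alpha_pk); first by rewrite expn_gt0 p_gt0.
    apply/leq_sizeP => e e_ge; rewrite coef_sum big1_seq // => tj /andP[_ tj_in].
    rewrite coefZ nth_default ?mulr0 // size_basis //.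
    exact: leq_trans (basis_deg_ltn_pexp p_gt0 tj_in) e_ge.
  rewrite /root /S rmorph_sum horner_sum -[X in _ == X]sum0; apply/eqP.
  by apply: eq_bigr => tj _; rewrite /= map_polyZ hornerZ horner_basis_poly.
apply: (distinct_size_polys_free (uniq_basis_index p k s) _ _ S0).
- move=> tj1 tj2 tj1_in tj2_in /=; rewrite !size_basis // => -[].
  by move=> eq_deg; apply: (basis_deg_inj p_gt0 tj1_in tj2_in eq_deg).
- by move=> tj tj_in; rewrite -size_poly_gt0 size_basis.
Qed.

Theorem corollary3p2 (m : int) (p k : nat) (alpha : algC) :
  squarefree_int m -> m != 1 -> m != -1 ->
  prime p -> (0 < k)%N ->
  alpha ^+ (p ^ k) = m%:~R ->
  let r := (m %% (p ^ k.+1)%:Z)%Z in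
  let s := (vp p (m ^+ p - m) - 1)%N in
  (s < k)%N ->
  (forall tj, tj \in basis_index p k s -> basis_elt p k r alpha tj \in Aint) /\
  Q_lin_indep (basis_index p k s) (basis_elt p k r alpha).
Proof.
move=> sqm m1 mN1 p_pr _ alpha_pk r s s_lt_k.
split=> [tj tj_in|]; last exact: basis_elt_free sqm m1 mN1 p_pr alpha_pk (ltnW s_lt_k).
have t_le_s := basis_index_fst_le tj_in.
have alpha_Aint : alpha \in Aint.
  by apply: Aint_of_exprn_int alpha_pk; rewrite expn_gt0 prime_gt0.
rewrite /basis_elt -mulrA rpredM ?rpredX //.
by apply: Aint_hpoly_div => //; apply: leq_trans t_le_s (ltnW s_lt_k).
Qed.
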